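(* For a semiring $(S,+,\cdot)$ the following are equivalent: (i) $S$ is a b-lattice of nil-extensions of left skew-rings; (ii) $S$ is a quasi completely regular semiring and for all $e,f\in E^+(S)$ there exists a positive integer $n$ such that $n(e+f)=n(e+f+e)$; (iii) $S$ is additively quasi regular, $b^2\,\mathscr{H}^{*^{+}}\,b$ for all $b\in S$, and for all $a,x\in S$, $a=a+x+a$ implies $a+x=a+2x+a$.
   Context: A semiring $(S,+,\cdot)$ has two associative operations with $a(b+c)=ab+ac$, $(b+c)a=ba+ca$. $na$ is the $n$-fold sum of $a$; $b^2=b\cdot b$. $E^+(S)$ is the set of additive idempotents. $a$ is additively regular if $a=a+x+a$ for some $x$; $S$ is additively quasi regular if for each $a$ some $na$ is additively regular. $a$ is completely regular if there is $x$ with $a=a+x+a$, $a+x=x+a$, $a(a+x)=a+x$; $S$ is quasi completely regular if for each $a$ some $na$ is completely regular. Green's relations of $(S,+)$: $\mathscr{L}^+,\mathscr{R}^+$. For additively quasi regular $S$, $m(a)$ is the least positive integer with $m(a)a$ additively regular; $a\,\mathscr{L}^{*^{+}}\,b$ iff $m(a)a\,\mathscr{L}^+\,m(b)b$, $a\,\mathscr{R}^{*^{+}}\,b$ iff $m(a)a\,\mathscr{R}^+\,m(b)b$, $\mathscr{H}^{*^{+}}=\mathscr{L}^{*^{+}}\cap\mathscr{R}^{*^{+}}$. A skew-ring is a semiring whose additive reduct is a (not necessarily commutative) group. A left zero semiring is a semiring with $(S,\cdot)$ a band and $(S,+)$ a left zero band ($a+b=a$ for all $a,b$). A left skew-ring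 is a semiring isomorphic to a direct product (componentwise operations) of a left zero semiring and a skew-ring. $S$ is a nil-extension of a subsemiring $K$ if $K$ is a bi-ideal ($a\in K,x\in S\Rightarrow a+x,x+a,ax,xa\in K$) and every $a\in S$ has some $na\in K$. A b-lattice is a semiring with $(S,\cdot)$ a band and $(S,+)$ a semilattice; $S$ is a b-lattice of semirings of a class if there is a congruence $\rho$ on $S$ with $S/\rho$ a b-lattice and each $\rho$-class a subsemiring in that class. *)

Set Implicit Arguments.
(* No commutativity of add, no zero or one is assumed. *)

Section Semiring.
Variable S : Type.
Variables add mul : S -> S -> S.

Definition is_semiring : Prop :=
  (forall a b c, add a (add b c) = add (add a b) c) /\
  (forall a b c, mul a (mul b c) = mul (mul a b) c) /\
  (forall a b c, mul a (add b c) = add (mul a b) (mul a c)) /\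
  (forall a b c, mul (add b c) a = add (mul b a) (mul c a)).

(* n-fold sum n a = a + ... + a (n copies); only meaningful for n >= 1,
   and every use below requires 0 < n (value at n = 0 is junk: a). *)
Fixpoint nsum (n : nat) (a : S) : S :=
  match n with
  | 0 => a
  | 1 => a
  | Datatypes.S m => add (nsum m a) a
  end.

Definition add_idem (e : S) : Prop := add e e = e.

Definition add_regular (a : S) : Prop := exists x, a = add (add a x) a.

Definition add_quasi_regular : Prop :=
  forall a, exists n, 0 < n /\ add_regular (nsum n a).

Definition completely_regular (a : S) : Prop :=
  exists x, a = add (add a x) a /\ add a x = add x a /\ mul a (add a x) = add a x.

Definition quasi_completely_regular : Prop :=
  forall a, exists n, 0 < n /\ completely_regular (nsum n a).

(* Green's relations of the semigroup (S,+) (computed in S^1). *)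
Definition greenL (a b : S) : Prop :=
  (a = b \/ exists x, a = add x b) /\ (b = a \/ exists y, b = add y a).
Definition greenR (a b : S) : Prop :=
  (a = b \/ exists x, a = add b x) /\ (b = a \/ exists y, b = add a y).

Definition is_m (a : S) (n : nat) : Prop :=
  0 < n /\ add_regular (nsum n a) /\
  (forall k, 0 < k -> add_regular (nsum k a) -> n <= k).

Definition Lstar (a b : S) : Prop :=
  forall ma mb, is_m a ma -> is_m b mb -> greenL (nsum ma a) (nsum mb b).
Definition Rstar (a b : S) : Prop :=
  forall ma mb, is_m a ma -> is_m b mb -> greenR (nsum ma a) (nsum mb b).
Definition Hstar (a b : S) : Prop := Lstar a b /\ Rstar a b.

End Semiring.

Definition left_zero_semiring (L : Type) (addL mulL : L -> L -> L) : Prop :=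
  is_semiring addL mulL /\ (forall a, mulL a a = a) /\ (forall a b, addL a b = a).

Definition skew_ring (R : Type) (addR mulR : R -> R -> R) : Prop :=
  is_semiring addR mulR /\
  exists z : R, (forall a, addR z a = a /\ addR a z = a) /\
    (forall a, exists b, addR a b = z /\ addR b a = z).

(* The subset K of S (assumed closed under add, mul) with the induced
   operations is a left skew-ring: it is isomorphic (via f restricted to K)
   to the direct product of a left zero semiring and a skew-ring. *)
Definition left_skew_ring_on (S : Type) (add mul : S -> S -> S) (K : S -> Prop)
  : Prop :=
  exists (L : Type) (addL mulL : L -> L -> L) (R : Type) (addR mulR : R -> R -> R)
         (f : S -> L * R),
    left_zero_semiring addL mulL /\ skew_ring addR mulR /\
    (forall x y, K x -> K y -> f x = f y -> x = y) /\
    (forall p, exists x, K x /\ f x = p) /\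
    (forall x y, K x -> K y ->
       f (add x y) = (addL (fst (f x)) (fst (f y)), addR (snd (f x)) (snd (f y)))) /\
    (forall x y, K x -> K y ->
       f (mul x y) = (mulL (fst (f x)) (fst (f y)), mulR (snd (f x)) (snd (f y)))).

Definition subsemiring (S : Type) (add mul : S -> S -> S) (T : S -> Prop) : Prop :=
  forall x y, T x -> T y -> T (add x y) /\ T (mul x y).

Definition nil_ext_left_skew_ring_on (S : Type) (add mul : S -> S -> S)
  (T : S -> Prop) : Prop :=
  exists K : S -> Prop,
    (forall x, K x -> T x) /\
    (forall a x, K a -> T x ->
       K (add a x) /\ K (add x a) /\ K (mul a x) /\ K (mul x a)) /\
    (forall a, T a -> exists n, 0 < n /\ K (nsum add n a)) /\
    left_skew_ring_on add mul K.

Definition b_lattice_of_nil_ext_left_skew_rings (S : Type) (add mul : S -> S -> S)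
  : Prop :=
  exists rho : S -> S -> Prop,
    (forall a, rho a a) /\ (forall a b, rho a b -> rho b a) /\
    (forall a b c, rho a b -> rho b c -> rho a c) /\
    (forall a b c, rho a b -> rho (add a c) (add b c) /\ rho (add c a) (add c b) /\
                              rho (mul a c) (mul b c) /\ rho (mul c a) (mul c b)) /\
    (* S/rho is a b-lattice *)
    (forall a, rho (mul a a) a) /\ (forall a, rho (add a a) a) /\
    (forall a b, rho (add a b) (add b a)) /\
    (forall a, subsemiring add mul (rho a) /\ nil_ext_left_skew_ring_on add mul (rho a)).

(* Each of (i)-(iii) is equivalent to the conjunction of
   (a) S is additively quasi regular,
   (b) r = r + x + r implies that r lies in the additive subgroup H_{r+x},
   (c) additive idempotents are multiplicative idempotents.
   Assume (a)-(c).  Every a has a unique additive idempotent e(a) whose subgroup contains a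
   multiple of a.  Put a <= b when e(a) + b lies in H_{e(a)}: this preorder is compatible with
   both operations, a + b is a greatest lower bound of a and b, and a, a a are equivalent, so
   the induced equivalence rho is a congruence with S / rho a b-lattice.  In a rho-class, with
   idempotent e = e(a), the additively regular elements form a bi-ideal K which every element
   enters after some multiple, and x |-> (e(x), e + x) is an isomorphism of K onto the left
   zero semiring of idempotents of the class times the skew-ring H_e with product e + r s.
   Conversely (i) gives (a)-(c) by computing in the kernels, (ii) by comparing the identity of
   the group of a multiple of r with r + x and x + r, and (iii) by applying the identity
   a + x = a + 2x + a to r and to its inverse x + r + x, with (c) read off the H*-relation
   between e and e e for idempotent e. *)

From Stdlib Require Import Lia PeanoNat ClassicalEpsilon ProofIrrelevance.

Lemma sig_ext {A : Type} {P : A -> Prop} (u v : sig P) : proj1_sig u = proj1_sig v -> u = v.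
Proof. apply eq_sig_hprop. intros; apply proof_irrelevance. Qed.

Lemma skew_ring_zero {R : Type} {addR mulR : R -> R -> R} : skew_ring addR mulR ->
  exists z, (forall a, addR z a = a /\ addR a z = a) /\
    (forall a, exists b, addR a b = z /\ addR b a = z) /\
    (forall a b, addR a b = b -> a = z) /\ mulR z z = z.
Proof.
  intros [[HA [_ [HDl _]]] [z [Hz Hinv]]].
  assert (Hc : forall a b, addR a b = b -> a = z).
  { intros a b H. destruct (Hinv b) as [b' [Hb1 _]].
    rewrite <- (proj2 (Hz a)), <- Hb1, HA, H. reflexivity. }
  exists z. split; [exact Hz | split; [exact Hinv | split; [exact Hc |]]].
  apply (Hc _ (mulR z z)). rewrite <- HDl, (proj1 (Hz z)). reflexivity.
Qed.

Section AdditiveSemigroup.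
Context {X : Type}.
Variable add : X -> X -> X.
Hypothesis addA : forall a b c, add a (add b c) = add (add a b) c.
Local Infix "⊕" := add (at level 50, left associativity).
Local Notation ns := (nsum add).

Local Ltac assoc := repeat rewrite addA; reflexivity.

Lemma nsumS n a : 0 < n -> ns (S n) a = ns n a ⊕ a.
Proof. destruct n; [lia | reflexivity]. Qed.

Lemma nsum_add_self n a : ns n a ⊕ a = a ⊕ ns n a.
Proof.
  induction n as [|[|n] IH]; try reflexivity.
  rewrite nsumS, IH by lia. rewrite <- addA, IH. reflexivity.
Qed.

Lemma nsumSl n a : 0 < n -> ns (S n) a = a ⊕ ns n a.
Proof. intros Hn. rewrite nsumS by exact Hn. apply nsum_add_self. Qed.

Lemma nsumD m n a : 0 < n -> 0 < m -> ns (n + m) a = ns n a ⊕ ns m a.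
Proof.
  revert n; induction m as [|[|m] IH]; intros n Hn Hm; [lia| |].
  - rewrite Nat.add_1_r. apply nsumS, Hn.
  - rewrite Nat.add_succ_r, nsumS, IH, (nsumS (S m)) by lia. assoc.
Qed.

Lemma nsumM m n a : 0 < n -> 0 < m -> ns (n * m) a = ns m (ns n a).
Proof.
  induction m as [|[|m] IH]; intros Hn Hm; [lia| |].
  - rewrite Nat.mul_1_r. reflexivity.
  - rewrite Nat.mul_succ_r, nsumD, IH, (nsumS (S m)) by lia. reflexivity.
Qed.

Lemma nsumC m n a : 0 < n -> 0 < m -> ns m (ns n a) = ns n (ns m a).
Proof. intros Hn Hm. rewrite <- !nsumM, Nat.mul_comm by lia. reflexivity. Qed.

Lemma nsum_idem n e : e ⊕ e = e -> ns n e = e.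
Proof.
  intros He. induction n as [|[|n] IH]; try reflexivity.
  rewrite nsumS, IH by lia. exact He.
Qed.

Lemma nsum_absorb_l n e r : e ⊕ r = r -> e ⊕ ns n r = ns n r.
Proof.
  intros H. induction n as [|[|n] IH]; try exact H.
  rewrite nsumS, addA, IH by lia. reflexivity.
Qed.

Lemma nsum_absorb_r n f r : r ⊕ f = r -> ns n r ⊕ f = ns n r.
Proof.
  intros H. induction n as [|[|n] IH]; try exact H.
  rewrite nsumS, <- addA, H by lia. reflexivity.
Qed.

Lemma nsum_addr_left_unit n c e : e ⊕ c = c -> 0 < n -> ns n (c ⊕ e) = ns n c ⊕ e.
Proof.
  intros H. induction n as [|[|n] IH]; intros Hn; [lia | reflexivity |].
  rewrite !nsumS, IH by lia.
  replace (ns (S n) c ⊕ e ⊕ (c ⊕ e)) with (ns (S n) c ⊕ (e ⊕ c) ⊕ e) by assoc.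
  rewrite H. reflexivity.
Qed.

Definition in_group (u e : X) : Prop :=
  e ⊕ e = e /\ e ⊕ u = u /\ u ⊕ e = u /\ exists v, u ⊕ v = e /\ v ⊕ u = e.

Lemma in_group_refl {e} : e ⊕ e = e -> in_group e e.
Proof. intros He. repeat split; auto. exists e. auto. Qed.

Lemma in_group_add {u w e} : in_group u e -> in_group w e -> in_group (u ⊕ w) e.
Proof.
  intros [He [Hl [Hr [v [Hv1 Hv2]]]]] [_ [Hl' [Hr' [v' [Hv1' Hv2']]]]].
  repeat split; auto.
  - rewrite addA, Hl. reflexivity.
  - rewrite <- addA, Hr'. reflexivity.
  - exists (v' ⊕ v). split.
    + replace (u ⊕ w ⊕ (v' ⊕ v)) with (u ⊕ (w ⊕ v') ⊕ v) by assoc.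
      rewrite Hv1', Hr. exact Hv1.
    + replace (v' ⊕ v ⊕ (u ⊕ w)) with (v' ⊕ (v ⊕ u) ⊕ w) by assoc.
      rewrite Hv2, <- addA, Hl'. exact Hv2'.
Qed.

Lemma in_group_nsum {n u e} : 0 < n -> in_group u e -> in_group (ns n u) e.
Proof.
  intros Hn H. induction n as [|[|n] IH]; [lia | exact H |].
  rewrite nsumS by lia. apply in_group_add; auto. apply IH; lia.
Qed.

Lemma in_group_unique u e f : in_group u e -> in_group u f -> e = f.
Proof.
  intros [He [Hl [Hr [v [Hv1 Hv2]]]]] [Hf [Hl' [Hr' [v' [Hv1' Hv2']]]]].
  assert (Ee : e ⊕ f = e) by (rewrite <- Hv2 at 1; rewrite <- addA, Hr'; exact Hv2).
  assert (Ef : e ⊕ f = f) by (rewrite <- Hv1'; rewrite addA, Hl; reflexivity).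
  congruence.
Qed.

Lemma in_group_idem {u e} : in_group u e -> u ⊕ u = u -> u = e.
Proof.
  intros [He [Hl [Hr [v [Hv1 Hv2]]]]] Hu.
  assert (H : u ⊕ (u ⊕ v) = u) by (rewrite Hv1; exact Hr).
  rewrite addA, Hu, Hv1 in H. congruence.
Qed.

Lemma in_group_regular {u e} : in_group u e -> add_regular add u.
Proof. intros [He [Hl [Hr [v [Hv1 Hv2]]]]]. exists v. rewrite Hv1. congruence. Qed.

Lemma in_group_inverse {u e} :
  in_group u e -> exists v, in_group v e /\ u ⊕ v = e /\ v ⊕ u = e.
Proof.
  intros [He [Hl [Hr [v [Hv1 Hv2]]]]].
  assert (Hv1' : u ⊕ (e ⊕ v ⊕ e) = e).
  { replace (u ⊕ (e ⊕ v ⊕ e)) with (u ⊕ e ⊕ v ⊕ e) by assoc. rewrite Hr, Hv1. exact He. }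
  assert (Hv2' : e ⊕ v ⊕ e ⊕ u = e).
  { replace (e ⊕ v ⊕ e ⊕ u) with (e ⊕ (v ⊕ (e ⊕ u))) by assoc. rewrite Hl, Hv2. exact He. }
  exists (e ⊕ v ⊕ e). repeat split; auto.
  - rewrite !addA, He. reflexivity.
  - rewrite <- addA, He. reflexivity.
  - exists u. auto.
Qed.

Lemma in_group_greenLR {u w e} :
  in_group u e -> in_group w e -> greenL add u w /\ greenR add u w.
Proof.
  intros [He [Hul [Hur [u' [Hu1 Hu2]]]]] [_ [Hwl [Hwr [w' [Hw1 Hw2]]]]].
  split; split; right.
  - exists (u ⊕ w'). rewrite <- addA, Hw2. auto.
  - exists (w ⊕ u'). rewrite <- addA, Hu2. auto.
  - exists (w' ⊕ u). rewrite addA, Hw1. auto.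
  - exists (u' ⊕ w). rewrite addA, Hu1. auto.
Qed.

Lemma greenLR_idem_eq {p q} :
  p ⊕ p = p -> q ⊕ q = q -> greenL add p q -> greenR add p q -> p = q.
Proof.
  intros Hp Hq [[E|[x Hx]] _] [_ [E'|[y Hy]]]; auto.
  assert (A : p ⊕ q = p) by (rewrite Hx at 1; rewrite <- addA, Hq; congruence).
  assert (B : p ⊕ q = q) by (rewrite Hy at 1; rewrite addA, Hp; congruence).
  congruence.
Qed.

Lemma in_group_of_absorb r x :
  r = r ⊕ x ⊕ r -> r ⊕ (r ⊕ x) = r -> r ⊕ x ⊕ (x ⊕ r) = r ⊕ x -> in_group r (r ⊕ x).
Proof.
  intros H Hre Hinv.
  assert (He : r ⊕ x ⊕ (r ⊕ x) = r ⊕ x) by (rewrite addA, <- H; reflexivity).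
  repeat split; auto.
  exists (r ⊕ x ⊕ x ⊕ (r ⊕ x)). split.
  - replace (r ⊕ (r ⊕ x ⊕ x ⊕ (r ⊕ x))) with (r ⊕ (r ⊕ x) ⊕ x ⊕ (r ⊕ x)) by assoc.
    rewrite Hre. exact He.
  - replace (r ⊕ x ⊕ x ⊕ (r ⊕ x) ⊕ r) with (r ⊕ x ⊕ x ⊕ (r ⊕ x ⊕ r)) by assoc.
    rewrite <- H, <- addA. exact Hinv.
Qed.

Lemma nsum_absorbed_r n a b : a ⊕ b = a -> a ⊕ ns n b = a.
Proof.
  intros H. induction n as [|[|n] IH]; try exact H.
  rewrite nsumS, addA, IH by lia. exact H.
Qed.

Lemma is_m_add_idem {e} : e ⊕ e = e -> is_m add e 1.
Proof.
  intros He. split; [lia | split; [| intros; lia]].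
  exists e. cbn. rewrite !He. reflexivity.
Qed.

Lemma regular_group_of_sandwich
  (sandwich : forall a x, a = a ⊕ x ⊕ a -> a ⊕ x = a ⊕ (x ⊕ x) ⊕ a) r x :
  r = r ⊕ x ⊕ r -> in_group r (r ⊕ x).
Proof.
  intros H. apply in_group_of_absorb; auto.
  - (* apply [sandwich] to the inverse [x ⊕ r ⊕ x] of [r] *)
    set (x' := x ⊕ r ⊕ x).
    assert (Hx' : x' = x' ⊕ r ⊕ x').
    { symmetry. unfold x'.
      replace (x ⊕ r ⊕ x ⊕ r ⊕ (x ⊕ r ⊕ x)) with (x ⊕ (r ⊕ x ⊕ r) ⊕ (x ⊕ r ⊕ x)) by assoc.
      rewrite <- H. replace (x ⊕ r ⊕ (x ⊕ r ⊕ x)) with (x ⊕ (r ⊕ x ⊕ r) ⊕ x) by assoc.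
      rewrite <- H. reflexivity. }
    assert (Er : r ⊕ x' = r ⊕ x) by (unfold x'; rewrite !addA, <- H; reflexivity).
    assert (El : x' ⊕ r = x ⊕ r).
    { unfold x'. replace (x ⊕ r ⊕ x ⊕ r) with (x ⊕ (r ⊕ x ⊕ r)) by assoc. rewrite <- H.
      reflexivity. }
    pose proof (sandwich _ _ Hx') as B.
    replace (x' ⊕ (r ⊕ r) ⊕ x') with (x' ⊕ r ⊕ (r ⊕ x')) in B by assoc.
    rewrite Er, El in B.
    symmetry. rewrite H at 1. rewrite <- addA, B, !addA, <- H. reflexivity.
  - replace (r ⊕ x ⊕ (x ⊕ r)) with (r ⊕ (x ⊕ x) ⊕ r) by assoc. symmetry. apply sandwich, H.
Qed.

Lemma regular_in_nsum_ideal {x v k} : x = x ⊕ x ⊕ v -> 0 < k -> exists s, x = ns k x ⊕ s.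
Proof.
  intros H Hk. induction k as [|[|k] IH]; [lia | exists (x ⊕ v); rewrite addA; exact H |].
  destruct IH as [s Hs]; [lia |].
  exists (s ⊕ v). rewrite nsumSl by lia. rewrite H at 1. rewrite Hs at 2. assoc.
Qed.

Section Distributive.
Variable mul : X -> X -> X.
Hypothesis mulA : forall a b c, mul a (mul b c) = mul (mul a b) c.
Hypothesis mulDl : forall a b c, mul a (add b c) = add (mul a b) (mul a c).
Hypothesis mulDr : forall a b c, mul (add b c) a = add (mul b a) (mul c a).
Local Infix "⊗" := mul (at level 40, left associativity).

Lemma nsum_mulr n a b : ns n (a ⊗ b) = ns n a ⊗ b.
Proof.
  induction n as [|[|n] IH]; try reflexivity.
  rewrite !(nsumS (S n)), IH, mulDr by lia. reflexivity.
Qed.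

Lemma nsum_mull n a b : ns n (a ⊗ b) = a ⊗ ns n b.
Proof.
  induction n as [|[|n] IH]; try reflexivity.
  rewrite !(nsumS (S n)), IH, mulDl by lia. reflexivity.
Qed.

Lemma add_idem_mull e c : e ⊕ e = e -> c ⊗ e ⊕ c ⊗ e = c ⊗ e.
Proof. intros He. rewrite <- mulDl, He. reflexivity. Qed.

Lemma add_idem_mulr e c : e ⊕ e = e -> e ⊗ c ⊕ e ⊗ c = e ⊗ c.
Proof. intros He. rewrite <- mulDr, He. reflexivity. Qed.

Section Core.
Hypothesis quasi : add_quasi_regular add.
Hypothesis regular_group : forall r x, r = r ⊕ x ⊕ r -> in_group r (r ⊕ x).
Hypothesis add_idem_mul_idem : forall e, e ⊕ e = e -> e ⊗ e = e.

Definition group_of (a e : X) : Prop := exists n, 0 < n /\ in_group (ns n a) e.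

Lemma group_of_exists a : exists e, group_of a e.
Proof.
  destruct (quasi a) as [n [Hn [x Hx]]].
  exists (ns n a ⊕ x), n. split; auto.
Qed.

Definition idem_of (a : X) : X :=
  proj1_sig (constructive_indefinite_description _ (group_of_exists a)).

Lemma idem_of_spec a : group_of a (idem_of a).
Proof. exact (proj2_sig (constructive_indefinite_description _ (group_of_exists a))). Qed.

Lemma idem_of_eq a e : group_of a e -> idem_of a = e.
Proof.
  destruct (idem_of_spec a) as [n [Hn He]]. intros [m [Hm Hf]].
  apply (in_group_unique (ns m (ns n a))).
  - apply in_group_nsum; auto.
  - rewrite nsumC by auto. apply in_group_nsum; auto.
Qed.

Lemma idem_of_add_idem a : idem_of a ⊕ idem_of a = idem_of a.
Proof. destruct (idem_of_spec a) as [n [_ [H _]]]. exact H. Qed.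

Lemma idem_of_in_group {u e} : in_group u e -> idem_of u = e.
Proof. intros H. apply idem_of_eq. exists 1. split; [lia | exact H]. Qed.

Lemma idem_of_idem e : e ⊕ e = e -> idem_of e = e.
Proof. intros He. apply idem_of_in_group, in_group_refl, He. Qed.

Lemma idem_of_nsum n a : 0 < n -> idem_of (ns n a) = idem_of a.
Proof.
  intros Hn. apply idem_of_eq. destruct (idem_of_spec a) as [m [Hm Hg]].
  exists m. split; auto. rewrite nsumC by auto. apply in_group_nsum; auto.
Qed.

Lemma idem_of_addr c : exists w, idem_of c = c ⊕ w.
Proof.
  destruct (idem_of_spec c) as [[|[|n]] [Hn [_ [_ [_ [v [Hv _]]]]]]]; [lia | now exists v |].
  rewrite nsumSl in Hv by lia. exists (ns (S n) c ⊕ v). rewrite <- Hv. symmetry. apply addA.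
Qed.

Lemma regular_in_group_idem_of {u} : add_regular add u -> in_group u (idem_of u).
Proof.
  intros [x Hx]. pose proof (regular_group _ _ Hx) as H.
  rewrite (idem_of_in_group H). exact H.
Qed.

(* [e ⊕ a] is R-related to [e]. *)
Definition below (e a : X) : Prop := exists y, e ⊕ a ⊕ y = e.

Lemma below_in_group {e a} : e ⊕ e = e -> below e a -> in_group (e ⊕ a) e.
Proof.
  intros He [y Hy].
  assert (H : e ⊕ a = e ⊕ a ⊕ y ⊕ (e ⊕ a)) by (rewrite Hy, addA, He; reflexivity).
  pose proof (regular_group _ _ H) as G. rewrite Hy in G. exact G.
Qed.

Lemma below_refl e : e ⊕ e = e -> below e e.
Proof. intros He. exists e. rewrite !He. reflexivity. Qed.

Lemma below_idem_of a : below (idem_of a) a.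
Proof.
  destruct (idem_of_addr a) as [w Hw]. exists w.
  rewrite <- addA, <- Hw. apply idem_of_add_idem.
Qed.

Lemma below_addl e a b : below e (a ⊕ b) -> below e a.
Proof. intros [y Hy]. exists (b ⊕ y). rewrite addA, <- (addA e a b). exact Hy. Qed.

Lemma below_idem {e f} : e ⊕ e = e -> f ⊕ f = f -> below e f -> e ⊕ f = e.
Proof.
  intros He Hf H. pose proof (below_in_group He H) as G.
  apply (in_group_idem G). destruct G as [_ [_ [Hr _]]].
  replace (e ⊕ f ⊕ (e ⊕ f)) with (e ⊕ f ⊕ e ⊕ f) by assoc.
  rewrite Hr, <- addA, Hf. reflexivity.
Qed.

Lemma below_trans {e f a} : e ⊕ e = e -> f ⊕ f = f -> below e f -> below f a -> below e a.
Proof.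
  intros He Hf Hef [z Hz]. pose proof (below_idem He Hf Hef) as H.
  exists z. rewrite <- H at 1.
  replace (e ⊕ f ⊕ a ⊕ z) with (e ⊕ (f ⊕ a ⊕ z)) by assoc. rewrite Hz. exact H.
Qed.

Lemma below_idem_of_r e a : e ⊕ e = e -> below e a -> below e (idem_of a).
Proof.
  intros He H. pose proof (below_in_group He H) as Hp. set (p := e ⊕ a) in *.
  assert (Hc : forall k, 0 < k -> e ⊕ ns k a = ns k p).
  { intros k Hk. induction k as [|[|k] IH]; [lia | reflexivity |].
    rewrite (nsumS (S k) a), (nsumS (S k) p), addA, IH by lia.
    assert (Hg : in_group (ns (S k) p) e) by (apply in_group_nsum; auto; lia).
    destruct Hg as [_ [_ [Hr _]]].
    rewrite <- Hr at 1. unfold p. assoc. }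
  destruct (idem_of_spec a) as [n [Hn [_ [Hl _]]]].
  destruct (in_group_nsum Hn Hp) as [_ [_ [_ [w [Hw _]]]]].
  exists (ns n a ⊕ w).
  replace (e ⊕ idem_of a ⊕ (ns n a ⊕ w)) with (e ⊕ (idem_of a ⊕ ns n a) ⊕ w) by assoc.
  rewrite Hl, Hc by auto. exact Hw.
Qed.

Lemma below_add e a b : e ⊕ e = e -> below e a -> below e b -> below e (a ⊕ b).
Proof.
  intros He Ha [y' Hb].
  destruct (below_in_group He Ha) as [_ [_ [Hr _]]].
  destruct Ha as [y Hy]. exists (y' ⊕ y).
  replace (e ⊕ (a ⊕ b) ⊕ (y' ⊕ y)) with (e ⊕ a ⊕ b ⊕ y' ⊕ y) by assoc.
  rewrite <- Hr.
  replace (e ⊕ a ⊕ e ⊕ b ⊕ y' ⊕ y) with (e ⊕ a ⊕ (e ⊕ b ⊕ y') ⊕ y) by assoc.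
  rewrite Hb, Hr. exact Hy.
Qed.

Lemma below_idem_of_addr a b : below (idem_of (a ⊕ b)) b.
Proof.
  set (g := idem_of (a ⊕ b)). assert (Hg : g ⊕ g = g) by apply idem_of_add_idem.
  destruct (idem_of_addr (a ⊕ b)) as [w Hw]. fold g in Hw.
  assert (H1 : g ⊕ a ⊕ (b ⊕ w) = g).
  { replace (g ⊕ a ⊕ (b ⊕ w)) with (g ⊕ (a ⊕ b ⊕ w)) by assoc. rewrite <- Hw. exact Hg. }
  assert (H2 : g ⊕ a = g ⊕ a ⊕ (b ⊕ w) ⊕ (g ⊕ a)) by (rewrite H1, addA, Hg; reflexivity).
  (* the group inverse [v] of [g ⊕ a] in H_g provides the witness *)
  destruct (regular_group _ _ H2) as [_ [_ [_ [v [_ Hv]]]]]. rewrite H1 in Hv.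
  exists (w ⊕ g ⊕ a). rewrite <- Hv at 1.
  replace (v ⊕ (g ⊕ a) ⊕ b ⊕ (w ⊕ g ⊕ a)) with (v ⊕ (g ⊕ a ⊕ (b ⊕ w) ⊕ (g ⊕ a))) by assoc.
  rewrite <- H2. exact Hv.
Qed.

Lemma below_addr e a b : e ⊕ e = e -> below e (a ⊕ b) -> below e b.
Proof.
  intros He H. apply (below_trans He (idem_of_add_idem (a ⊕ b))).
  - apply below_idem_of_r; auto.
  - apply below_idem_of_addr.
Qed.

Lemma below_mull {e a} c : below e a -> below (c ⊗ e) (c ⊗ a).
Proof. intros [y Hy]. exists (c ⊗ y). rewrite <- !mulDl, Hy. reflexivity. Qed.

Lemma below_mulr {e a} c : below e a -> below (e ⊗ c) (a ⊗ c).
Proof. intros [y Hy]. exists (y ⊗ c). rewrite <- !mulDr, Hy. reflexivity. Qed.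

Lemma below_idem_of_mull c a : below (idem_of (c ⊗ a)) (c ⊗ idem_of a).
Proof.
  destruct (idem_of_spec a) as [n [Hn [_ [Hl _]]]].
  rewrite <- (idem_of_nsum _ (c ⊗ a) Hn), nsum_mull.
  apply (below_addl _ _ (c ⊗ ns n a)).
  rewrite <- mulDl, Hl. apply below_idem_of.
Qed.

Lemma below_idem_of_mulr c a : below (idem_of (a ⊗ c)) (idem_of a ⊗ c).
Proof.
  destruct (idem_of_spec a) as [n [Hn [_ [_ [Hr _]]]]].
  rewrite <- (idem_of_nsum _ (a ⊗ c) Hn), nsum_mulr.
  apply (below_addr _ (ns n a ⊗ c)); [apply idem_of_add_idem |].
  rewrite <- mulDr, Hr. apply below_idem_of.
Qed.

(* [ble] is the preorder whose quotient is the natural order of the b-lattice [X / rho]. *)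
Definition ble (a b : X) : Prop := below (idem_of a) b.
Definition rho (a b : X) : Prop := ble a b /\ ble b a.

Lemma ble_refl a : ble a a.
Proof. apply below_idem_of. Qed.

Lemma ble_trans a b c : ble a b -> ble b c -> ble a c.
Proof.
  intros Hab Hbc. apply (below_trans (idem_of_add_idem a) (idem_of_add_idem b)); auto.
  apply below_idem_of_r; auto. apply idem_of_add_idem.
Qed.

Lemma ble_addl a b : ble (a ⊕ b) a.
Proof. apply (below_addl _ _ b), below_idem_of. Qed.

Lemma ble_addr a b : ble (a ⊕ b) b.
Proof. apply below_idem_of_addr. Qed.

Lemma ble_add a b c : ble c a -> ble c b -> ble c (a ⊕ b).
Proof. intros Ha Hb. apply below_add; auto. apply idem_of_add_idem. Qed.

Lemma ble_mull a b c : ble a b -> ble (c ⊗ a) (c ⊗ b).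
Proof.
  intros H. pose proof (idem_of_add_idem a) as Ea. pose proof (idem_of_add_idem b) as Eb.
  apply (below_trans (f := c ⊗ idem_of a)); [apply idem_of_add_idem | apply add_idem_mull; auto |
    apply below_idem_of_mull |].
  apply (below_trans (f := c ⊗ idem_of b)); try apply add_idem_mull; auto.
  - apply below_mull, below_idem_of_r; auto.
  - apply below_mull, below_idem_of.
Qed.

Lemma ble_mulr a b c : ble a b -> ble (a ⊗ c) (b ⊗ c).
Proof.
  intros H. pose proof (idem_of_add_idem a) as Ea. pose proof (idem_of_add_idem b) as Eb.
  apply (below_trans (f := idem_of a ⊗ c)); [apply idem_of_add_idem | apply add_idem_mulr; auto |
    apply below_idem_of_mulr |].
  apply (below_trans (f := idem_of b ⊗ c)); try apply add_idem_mulr; auto.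
  - apply below_mulr, below_idem_of_r; auto.
  - apply below_mulr, below_idem_of.
Qed.

Lemma ble_sq_l a : ble (a ⊗ a) a.
Proof.
  pose proof (idem_of_add_idem a) as Ea. pose proof (add_idem_mull _ a Ea) as Eaa.
  apply (below_trans (f := a ⊗ idem_of a)); [apply idem_of_add_idem | exact Eaa |
    apply below_idem_of_mull |].
  apply (below_trans (f := idem_of a)); auto; [| apply below_idem_of].
  pose proof (below_idem_of_mulr (idem_of a) a) as P.
  rewrite idem_of_idem, add_idem_mul_idem in P; auto.
Qed.

Lemma ble_sq_r a : ble a (a ⊗ a).
Proof.
  pose proof (idem_of_add_idem a) as Ea. unfold ble.
  rewrite <- (add_idem_mul_idem _ Ea) at 1.
  apply (below_trans (f := idem_of a ⊗ a)); [| apply add_idem_mulr; auto | |].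
  - rewrite add_idem_mul_idem; auto.
  - apply below_mull, below_idem_of.
  - apply below_mulr, below_idem_of.
Qed.

Lemma rho_refl a : rho a a.
Proof. split; apply ble_refl. Qed.

Lemma rho_sym {a b} : rho a b -> rho b a.
Proof. intros [H1 H2]; split; auto. Qed.

Lemma rho_trans a b c : rho a b -> rho b c -> rho a c.
Proof. intros [H1 H2] [H3 H4]; split; eapply ble_trans; eauto. Qed.

Lemma rho_addr a b c : rho a b -> rho (a ⊕ c) (b ⊕ c).
Proof.
  intros [H1 H2]; split; apply ble_add; try apply ble_addr;
    eapply ble_trans; try apply ble_addl; auto.
Qed.

Lemma rho_addl a b c : rho a b -> rho (c ⊕ a) (c ⊕ b).
Proof.
  intros [H1 H2]; split; apply ble_add; try apply ble_addl;
    eapply ble_trans; try apply ble_addr; auto.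
Qed.

Lemma rho_mulr a b c : rho a b -> rho (a ⊗ c) (b ⊗ c).
Proof. intros [H1 H2]; split; apply ble_mulr; auto. Qed.

Lemma rho_mull a b c : rho a b -> rho (c ⊗ a) (c ⊗ b).
Proof. intros [H1 H2]; split; apply ble_mull; auto. Qed.

Lemma rho_addC a b : rho (a ⊕ b) (b ⊕ a).
Proof. split; apply ble_add; first [apply ble_addl | apply ble_addr]. Qed.

Lemma rho_add_self a : rho (a ⊕ a) a.
Proof. split; [apply ble_addl | apply ble_add; apply ble_refl]. Qed.

Lemma rho_mul_self a : rho (a ⊗ a) a.
Proof. split; [apply ble_sq_l | apply ble_sq_r]. Qed.

Lemma rho_idem_of a : rho a (idem_of a).
Proof.
  split; unfold ble.
  - apply below_refl, idem_of_add_idem.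
  - rewrite idem_of_idem by apply idem_of_add_idem. apply below_idem_of.
Qed.

Lemma rho_idem_in_group {e y} : e ⊕ e = e -> rho e y -> in_group (e ⊕ y) e.
Proof.
  intros He [H _]. unfold ble in H. rewrite idem_of_idem in H by exact He.
  exact (below_in_group He H).
Qed.

Lemma rho_add_idem e f : e ⊕ e = e -> f ⊕ f = f -> rho e f -> e ⊕ f = e.
Proof.
  intros He Hf [H _]. unfold ble in H. rewrite idem_of_idem in H by auto.
  apply below_idem; auto.
Qed.

Lemma in_group_mulr {x} y : add_regular add x -> in_group (x ⊗ y) (idem_of x ⊗ y).
Proof.
  intros Hx. destruct (regular_in_group_idem_of Hx) as [He [Hl _]].
  pose proof (below_in_group (add_idem_mulr _ y He) (below_mulr y (below_idem_of x))) as G.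
  rewrite <- mulDr, Hl in G. exact G.
Qed.

Lemma in_group_addr {x y} : add_regular add x -> ble x y -> in_group (x ⊕ y) (idem_of x).
Proof.
  intros Hx H. pose proof (regular_in_group_idem_of Hx) as G.
  pose proof (below_in_group (idem_of_add_idem x) H) as Gy.
  destruct G as [_ [_ [Hr _]]].
  replace (x ⊕ y) with (x ⊕ (idem_of x ⊕ y)) by (rewrite addA, Hr; reflexivity).
  apply in_group_add; auto. apply regular_in_group_idem_of, Hx.
Qed.

Lemma in_group_of_right_regular {a v} : a = a ⊕ a ⊕ v -> in_group a (idem_of a).
Proof.
  intros Ha. destruct (idem_of_spec a) as [m [Hm [_ [Hl _]]]].
  destruct (regular_in_nsum_ideal Ha Hm) as [s Hs].
  assert (Hga : idem_of a ⊕ a = a) by (rewrite Hs at 2; rewrite addA, Hl; congruence).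
  pose proof (below_in_group (idem_of_add_idem a) (below_idem_of a)) as G.
  rewrite Hga in G. exact G.
Qed.

Lemma regular_addl {x y} : add_regular add x -> ble x y -> add_regular add (y ⊕ x).
Proof.
  intros Hx H. destruct (regular_in_group_idem_of Hx) as [He [Hex _]].
  set (e := idem_of x) in *.
  destruct (below_in_group He H) as [_ [_ [Hpr [v [Hv _]]]]].
  set (a := y ⊕ e).
  assert (Ha : a = a ⊕ a ⊕ v).
  { unfold a. replace (y ⊕ e ⊕ (y ⊕ e) ⊕ v) with (y ⊕ (e ⊕ y ⊕ e ⊕ v)) by assoc.
    rewrite Hpr, Hv. reflexivity. }
  pose proof (in_group_of_right_regular Ha) as Ga.
  assert (Hgx : below (idem_of a) x).
  { apply (below_trans (idem_of_add_idem a) He); [apply below_idem_of_addr |].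
    apply below_idem_of. }
  apply (in_group_regular (e := idem_of a)).
  replace (y ⊕ x) with (a ⊕ (idem_of a ⊕ x)).
  - apply in_group_add; auto. apply below_in_group; auto. apply idem_of_add_idem.
  - destruct Ga as [_ [_ [Har _]]]. rewrite addA, Har. unfold a. rewrite <- addA, Hex.
    reflexivity.
Qed.

Lemma regular_mull {x} y : add_regular add x -> add_regular add (y ⊗ x).
Proof.
  intros Hx. destruct (regular_in_group_idem_of Hx) as [He [_ [Hr _]]].
  assert (Hye : y ⊗ idem_of x ⊕ y ⊗ idem_of x = y ⊗ idem_of x) by (apply add_idem_mull, He).
  assert (Hreg : add_regular add (y ⊗ idem_of x)) by exact (in_group_regular (in_group_refl Hye)).
  assert (Hle : ble (y ⊗ idem_of x) (y ⊗ x)).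
  { unfold ble. rewrite idem_of_idem by exact Hye. apply below_mull, below_idem_of. }
  pose proof (regular_addl Hreg Hle) as R. rewrite <- mulDl, Hr in R. exact R.
Qed.

Lemma idem_of_mul {x y} :
  add_regular add x -> add_regular add y -> idem_of (x ⊗ y) = idem_of x ⊗ idem_of y.
Proof.
  intros Hx Hy.
  destruct (regular_in_group_idem_of Hx) as [Hex [_ [_ [x' [Hx' _]]]]].
  destruct (regular_in_group_idem_of Hy) as [Hey [_ [_ [y' [Hy' _]]]]].
  pose proof (regular_in_group_idem_of (in_group_regular (in_group_mulr y Hx))) as [Hk [Hkl _]].
  set (k := idem_of (x ⊗ y)) in *.
  assert (E1 : idem_of x ⊗ idem_of y = k ⊕ idem_of x ⊗ idem_of y).
  { rewrite <- Hx', <- Hy', mulDr, !mulDl, !addA, Hkl. reflexivity. }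
  assert (E2 : k ⊕ idem_of x ⊗ idem_of y = k).
  { apply rho_add_idem; auto; [apply add_idem_mulr, Hex |].
    apply (rho_trans _ (x ⊗ y)); [apply rho_sym, rho_idem_of |].
    apply (rho_trans _ (idem_of x ⊗ y)); [apply rho_mulr | apply rho_mull]; apply rho_idem_of. }
  congruence.
Qed.

Lemma idem_of_sq b : idem_of (b ⊗ b) = idem_of b.
Proof.
  destruct (quasi b) as [n [Hn Hr]].
  pose proof (idem_of_mul Hr Hr) as H. rewrite idem_of_nsum in H by auto.
  rewrite (add_idem_mul_idem _ (idem_of_add_idem b)) in H.
  rewrite <- nsum_mulr, <- nsum_mull, !idem_of_nsum in H by auto. exact H.
Qed.

Lemma qcr_of_core : quasi_completely_regular add mul.
Proof.
  intros a. destruct (quasi a) as [n [Hn Hr]]. exists n. split; auto.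
  set (u := ns n a) in *.
  pose proof (regular_in_group_idem_of Hr) as G.
  destruct G as [He [Hl [Hur [v [Hv1 Hv2]]]]].
  pose proof (in_group_mulr (idem_of u) Hr) as Gm. rewrite (add_idem_mul_idem _ He) in Gm.
  exists v. split; [| split].
  - rewrite Hv1. congruence.
  - congruence.
  - rewrite Hv1. apply (in_group_idem Gm), add_idem_mull, He.
Qed.

Lemma nsum_idem_sum_of_core e f : e ⊕ e = e -> f ⊕ f = f ->
  exists n, 0 < n /\ ns n (e ⊕ f) = ns n (e ⊕ f ⊕ e).
Proof.
  intros He Hf. set (c := e ⊕ f).
  destruct (quasi c) as [n [Hn Hr]]. exists n. split; auto.
  rewrite nsum_addr_left_unit by (auto; unfold c; rewrite addA, He; reflexivity).
  destruct (regular_in_group_idem_of Hr) as [_ [_ [Hcg _]]].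
  rewrite idem_of_nsum in Hcg by auto.
  assert (Hge : idem_of c ⊕ e = idem_of c).
  { apply below_idem; auto. apply idem_of_add_idem. apply ble_addl. }
  rewrite <- Hcg at 2. rewrite <- addA, Hge, Hcg. reflexivity.
Qed.

Lemma Hstar_mul_self_of_core b : Hstar add (b ⊗ b) b.
Proof.
  enough (G : forall ma mb, is_m add (b ⊗ b) ma -> is_m add b mb ->
            greenL add (ns ma (b ⊗ b)) (ns mb b) /\ greenR add (ns ma (b ⊗ b)) (ns mb b)).
  { split; intros ma mb H1 H2; apply (G ma mb H1 H2). }
  intros ma mb [Hma [Hra _]] [Hmb [Hrb _]].
  pose proof (regular_in_group_idem_of Hra) as G1. pose proof (regular_in_group_idem_of Hrb) as G2.
  rewrite idem_of_nsum, idem_of_sq in G1 by auto. rewrite idem_of_nsum in G2 by auto.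
  exact (in_group_greenLR G1 G2).
Qed.

Lemma regular_sandwich_of_core a x : a = a ⊕ x ⊕ a -> a ⊕ x = a ⊕ (x ⊕ x) ⊕ a.
Proof.
  intros Hax. pose proof (regular_group _ _ Hax) as G.
  assert (Hf : x ⊕ a ⊕ (x ⊕ a) = x ⊕ a).
  { replace (x ⊕ a ⊕ (x ⊕ a)) with (x ⊕ (a ⊕ x ⊕ a)) by assoc. rewrite <- Hax. reflexivity. }
  assert (Hle : ble a x).
  { rewrite Hax. apply (ble_trans _ (a ⊕ x)); [apply ble_addl | apply ble_addr]. }
  assert (Haxa : ble a (x ⊕ a)) by (apply ble_add; auto; apply ble_refl).
  unfold ble in Haxa. rewrite (idem_of_in_group G) in Haxa.
  destruct G as [He _].
  replace (a ⊕ (x ⊕ x) ⊕ a) with (a ⊕ x ⊕ (x ⊕ a)) by assoc.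
  symmetry. apply below_idem; auto.
Qed.

Section Class.
Variable a0 : X.
Local Notation e0 := (idem_of a0).

(* The bi-ideal of the class of [a0]; it splits as (idempotents of the class) x [H_e0]. *)
Definition kernel (x : X) : Prop := rho a0 x /\ add_regular add x.
Definition class_idem : Type := {e : X | e ⊕ e = e /\ rho a0 e}.
Definition class_group : Type := {r : X | in_group r e0}.

Lemma e0_add_idem : e0 ⊕ e0 = e0.
Proof. apply idem_of_add_idem. Qed.

Lemma rho_e0 : rho a0 e0.
Proof. apply rho_idem_of. Qed.

Lemma class_idem_left_zero {f g} :
  f ⊕ f = f -> rho a0 f -> g ⊕ g = g -> rho a0 g -> f ⊕ g = f.
Proof.
  intros Hf Hrf Hg Hrg. apply rho_add_idem; auto.
  apply (rho_trans _ a0); auto. apply rho_sym; auto.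
Qed.

Lemma rho_class_add {x y} : rho a0 x -> rho a0 y -> rho a0 (x ⊕ y).
Proof.
  intros Hx Hy. apply (rho_trans _ (a0 ⊕ a0)); [apply rho_sym, rho_add_self |].
  apply (rho_trans _ (x ⊕ a0)); [apply rho_addr | apply rho_addl]; auto.
Qed.

Lemma rho_class_mul {x y} : rho a0 x -> rho a0 y -> rho a0 (x ⊗ y).
Proof.
  intros Hx Hy. apply (rho_trans _ (a0 ⊗ a0)); [apply rho_sym, rho_mul_self |].
  apply (rho_trans _ (x ⊗ a0)); [apply rho_mulr | apply rho_mull]; auto.
Qed.

Lemma rho_class_group {r} : in_group r e0 -> rho a0 r.
Proof.
  intros H. apply (rho_trans _ e0); [apply rho_e0 |].
  rewrite <- (idem_of_in_group H). apply rho_sym, rho_idem_of.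
Qed.

Lemma in_group_class_idem_add {e y} :
  e ⊕ e = e -> rho a0 e -> rho a0 y -> in_group (e ⊕ y) e.
Proof.
  intros He Hre Hy. apply rho_idem_in_group; auto.
  apply (rho_trans _ a0); auto. apply rho_sym, Hre.
Qed.

Lemma in_group_e0_add {y} : rho a0 y -> in_group (e0 ⊕ y) e0.
Proof. apply in_group_class_idem_add; [apply e0_add_idem | apply rho_e0]. Qed.

Lemma kernel_addr_idem {x f} : kernel x -> f ⊕ f = f -> rho a0 f -> x ⊕ f = x.
Proof.
  intros [Hx Hreg] Hf Hrf. destruct (regular_in_group_idem_of Hreg) as [Hz [_ [Hr _]]].
  assert (H : idem_of x ⊕ f = idem_of x).
  { apply class_idem_left_zero; auto. apply (rho_trans _ x); auto. apply rho_idem_of. }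
  rewrite <- Hr at 1. rewrite <- addA, H, Hr. reflexivity.
Qed.

Lemma kernel_mul x y : kernel x -> rho a0 y -> kernel (x ⊗ y).
Proof.
  intros [Hx Hreg] Hy. split; [apply rho_class_mul; auto |].
  exact (in_group_regular (in_group_mulr y Hreg)).
Qed.

Lemma kernel_of_group {r} : in_group r e0 -> kernel r.
Proof. intros H. split; [apply rho_class_group, H | exact (in_group_regular H)]. Qed.

Lemma idem_of_kernel {x} : kernel x -> idem_of x ⊕ idem_of x = idem_of x /\ rho a0 (idem_of x).
Proof.
  intros [Hx _]. split; [apply idem_of_add_idem |].
  apply (rho_trans _ x); auto. apply rho_idem_of.
Qed.

Lemma kernel_decompose {x} : kernel x -> x = idem_of x ⊕ (e0 ⊕ x).
Proof.
  intros Hk. destruct (regular_in_group_idem_of (proj2 Hk)) as [_ [Hl _]].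
  destruct (idem_of_kernel Hk) as [Hi Hri].
  rewrite addA, (class_idem_left_zero Hi Hri e0_add_idem rho_e0), Hl. reflexivity.
Qed.

Definition class_idem_mul (e f : class_idem) : class_idem :=
  exist _ (proj1_sig e ⊗ proj1_sig f)
    (conj (add_idem_mull _ _ (proj1 (proj2_sig f)))
          (rho_class_mul (proj2 (proj2_sig e)) (proj2 (proj2_sig f)))).

Definition class_group_add (r s : class_group) : class_group :=
  exist _ (proj1_sig r ⊕ proj1_sig s) (in_group_add (proj2_sig r) (proj2_sig s)).

(* [r ⊗ s] need not lie in H_e0; translating by [e0] brings it back. *)
Definition class_group_mul (r s : class_group) : class_group :=
  exist _ (e0 ⊕ proj1_sig r ⊗ proj1_sig s)
    (in_group_e0_add (rho_class_mul (rho_class_group (proj2_sig r))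
                                    (rho_class_group (proj2_sig s)))).

Lemma class_idem_left_zero_semiring : left_zero_semiring (fun e _ => e) class_idem_mul.
Proof.
  split; [split; [| split; [| split]] | split]; intros; try reflexivity.
  - apply sig_ext, mulA.
  - apply sig_ext, add_idem_mul_idem, (proj1 (proj2_sig a)).
Qed.

Lemma class_group_skew_ring : skew_ring class_group_add class_group_mul.
Proof.
  assert (E0l : forall r, in_group r e0 -> e0 ⊕ r ⊗ e0 = e0).
  { intros r Hr. apply class_idem_left_zero; auto using e0_add_idem, rho_e0.
    - apply add_idem_mull, e0_add_idem.
    - apply rho_class_mul; auto using rho_class_group, rho_e0. }
  assert (E0r : forall r, in_group r e0 -> e0 ⊕ e0 ⊗ r = e0).
  { intros r Hr. apply class_idem_left_zero; auto using e0_add_idem, rho_e0.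
    - apply add_idem_mulr, e0_add_idem.
    - apply rho_class_mul; auto using rho_class_group, rho_e0. }
  assert (Kmul : forall r s, in_group r e0 -> in_group s e0 -> r ⊗ s ⊕ e0 = r ⊗ s).
  { intros r s Hr Hs. apply kernel_addr_idem; auto using e0_add_idem, rho_e0.
    apply kernel_mul; [apply kernel_of_group, Hr | apply rho_class_group, Hs]. }
  split; [split; [| split; [| split]] |].
  - intros. apply sig_ext, addA.
  - intros [x Hx] [y Hy] [z Hz]. apply sig_ext. cbn.
    rewrite mulDl, mulDr, !addA, E0l, E0r, !mulA by auto. reflexivity.
  - intros [x Hx] [y Hy] [z Hz]. apply sig_ext. cbn.
    rewrite mulDl. replace (e0 ⊕ x ⊗ y ⊕ (e0 ⊕ x ⊗ z)) with (e0 ⊕ (x ⊗ y ⊕ e0) ⊕ x ⊗ z) by assoc.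
    rewrite Kmul by auto. assoc.
  - intros [x Hx] [y Hy] [z Hz]. apply sig_ext. cbn.
    rewrite mulDr. replace (e0 ⊕ y ⊗ x ⊕ (e0 ⊕ z ⊗ x)) with (e0 ⊕ (y ⊗ x ⊕ e0) ⊕ z ⊗ x) by assoc.
    rewrite Kmul by auto. assoc.
  - exists (exist (fun r => in_group r e0) e0 (in_group_refl e0_add_idem)). split.
    + intros [x Hx]. pose proof Hx as [_ [Hl [Hr _]]]. split; apply sig_ext; auto.
    + intros [x Hx]. destruct (in_group_inverse Hx) as [v [Hv [H1 H2]]].
      exists (exist (fun r => in_group r e0) v Hv). split; apply sig_ext; auto.
Qed.

(* Outside the kernel the value of [kernel_split] is irrelevant. *)
Definition kernel_split (x : X) : class_idem * class_group :=
  match excluded_middle_informative (kernel x) with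
  | left Hx => (exist _ (idem_of x) (idem_of_kernel Hx),
                exist (fun r => in_group r e0) (e0 ⊕ x) (in_group_e0_add (proj1 Hx)))
  | right _ => (exist _ e0 (conj e0_add_idem rho_e0),
                exist (fun r => in_group r e0) e0 (in_group_refl e0_add_idem))
  end.

Lemma kernel_split_spec {x} : kernel x ->
  proj1_sig (fst (kernel_split x)) = idem_of x /\ proj1_sig (snd (kernel_split x)) = e0 ⊕ x.
Proof.
  intros Hx. unfold kernel_split.
  destruct (excluded_middle_informative (kernel x)); [split; reflexivity | contradiction].
Qed.

Lemma kernel_split_eq {x p} : kernel x ->
  proj1_sig (fst p) = idem_of x -> proj1_sig (snd p) = e0 ⊕ x -> kernel_split x = p.
Proof.
  intros Hx H1 H2. destruct (kernel_split_spec Hx) as [E1 E2].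
  rewrite (surjective_pairing p), (surjective_pairing (kernel_split x)).
  f_equal; apply sig_ext; congruence.
Qed.

Lemma kernel_left_skew_ring : left_skew_ring_on add mul kernel.
Proof.
  exists class_idem, (fun e _ => e), class_idem_mul, class_group, class_group_add,
    class_group_mul, kernel_split.
  split; [exact class_idem_left_zero_semiring |].
  split; [exact class_group_skew_ring |].
  split; [| split; [| split]].
  - intros x y Hx Hy Hxy.
    destruct (kernel_split_spec Hx) as [A1 A2], (kernel_split_spec Hy) as [B1 B2].
    rewrite (kernel_decompose Hx), (kernel_decompose Hy), <- A1, <- A2, <- B1, <- B2, Hxy.
    reflexivity.
  - intros [[l [Hl Hrl]] [r Hr]].
    pose proof (in_group_class_idem_add Hl Hrl (rho_class_group Hr)) as G.
    assert (Hk : kernel (l ⊕ r)).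
    { split; [apply rho_class_add; auto; apply rho_class_group, Hr | exact (in_group_regular G)]. }
    exists (l ⊕ r). split; auto.
    apply kernel_split_eq; cbn; auto.
    + symmetry. apply idem_of_in_group, G.
    + rewrite addA, (class_idem_left_zero e0_add_idem rho_e0 Hl Hrl). symmetry. apply Hr.
  - intros x y Hx Hy.
    assert (Hle : ble x y) by exact (proj1 (rho_trans _ _ _ (rho_sym (proj1 Hx)) (proj1 Hy))).
    pose proof (in_group_addr (proj2 Hx) Hle) as G.
    assert (Hk : kernel (x ⊕ y)).
    { split; [apply rho_class_add; [apply Hx | apply Hy] | exact (in_group_regular G)]. }
    destruct (kernel_split_spec Hx) as [A1 A2], (kernel_split_spec Hy) as [B1 B2].
    apply kernel_split_eq; cbn; auto.
    + rewrite A1. symmetry. apply idem_of_in_group, G.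
    + rewrite A2, B2. replace (e0 ⊕ x ⊕ (e0 ⊕ y)) with (e0 ⊕ (x ⊕ e0) ⊕ y) by assoc.
      rewrite (kernel_addr_idem Hx e0_add_idem rho_e0). assoc.
  - intros x y Hx Hy.
    destruct (kernel_split_spec Hx) as [A1 A2], (kernel_split_spec Hy) as [B1 B2].
    apply kernel_split_eq; cbn; [apply kernel_mul; [exact Hx | apply Hy] | |].
    + rewrite A1, B1. symmetry. apply idem_of_mul; [apply Hx | apply Hy].
    + rewrite A2, B2, mulDr, !mulDl, !addA, (add_idem_mul_idem _ e0_add_idem), e0_add_idem.
      rewrite (class_idem_left_zero e0_add_idem rho_e0 (add_idem_mulr _ y e0_add_idem)),
        (class_idem_left_zero e0_add_idem rho_e0 (add_idem_mull _ x e0_add_idem));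
        destruct Hx, Hy; auto using rho_class_mul, rho_e0.
Qed.

Lemma class_nil_extension : nil_ext_left_skew_ring_on add mul (rho a0).
Proof.
  exists kernel. split; [| split; [| split]].
  - intros x [H _]. exact H.
  - intros a x [Ha Hreg] Hx.
    assert (Hle : ble a x) by exact (proj1 (rho_trans _ _ _ (rho_sym Ha) Hx)).
    split; [split | split; [split | split; split]];
      try solve [apply rho_class_add; auto | apply rho_class_mul; auto].
    + exact (in_group_regular (in_group_addr Hreg Hle)).
    + exact (regular_addl Hreg Hle).
    + exact (in_group_regular (in_group_mulr x Hreg)).
    + exact (regular_mull x Hreg).
  - intros a Ha. destruct (quasi a) as [n [Hn Hr]]. exists n. split; auto. split; auto.
    apply (rho_trans _ a); auto. apply (rho_trans _ (idem_of a)); [apply rho_idem_of |].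
    rewrite <- (idem_of_nsum _ a Hn). apply rho_sym, rho_idem_of.
  - exact kernel_left_skew_ring.
Qed.

End Class.

Lemma b_lattice_of_core : b_lattice_of_nil_ext_left_skew_rings add mul.
Proof.
  exists rho.
  refine (conj rho_refl (conj (@rho_sym) (conj rho_trans
    (conj _ (conj rho_mul_self (conj rho_add_self (conj rho_addC _))))))).
  - intros a b c H.
    exact (conj (rho_addr _ _ c H) (conj (rho_addl _ _ c H)
             (conj (rho_mulr _ _ c H) (rho_mull _ _ c H)))).
  - intros a. split; [| exact (class_nil_extension a)].
    intros x y Hx Hy. exact (conj (rho_class_add a Hx Hy) (rho_class_mul a Hx Hy)).
Qed.

End Core.

Section LeftSkewRing.
Context {K : X -> Prop}.
Hypothesis K_subsemiring : subsemiring add mul K.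
Hypothesis K_left_skew : left_skew_ring_on add mul K.

Lemma left_skew_ring_regular {k} : K k -> add_regular add k.
Proof.
  destruct K_left_skew as (L & addL & mulL & R & addR & mulR & f & [_ [_ Hlz]] & HR &
    Hinj & Hsurj & Hadd & _).
  destruct (skew_ring_zero HR) as [z [Hz [Hinv _]]].
  intros Hk. destruct (f k) as [l r] eqn:Ek.
  destruct (Hinv r) as [b [Hb _]]. destruct (Hsurj (l, b)) as [y [Hy Efy]].
  exists y. symmetry. apply Hinj; [apply K_subsemiring; [apply K_subsemiring |] | |]; auto.
  rewrite !Hadd, Ek, Efy by (auto; apply K_subsemiring; auto). cbn.
  rewrite !Hlz, Hb, (proj1 (Hz r)). reflexivity.
Qed.

Lemma left_skew_ring_in_group {r p} :
  K r -> K p -> p ⊕ p = p -> p ⊕ r = r -> in_group r p.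
Proof.
  destruct K_left_skew as (L & addL & mulL & R & addR & mulR & f & [_ [_ Hlz]] & HR &
    Hinj & Hsurj & Hadd & _).
  destruct (skew_ring_zero HR) as [z [Hz [Hinv [Hc _]]]].
  intros Hr Hp Hpp Hpr. destruct (f r) as [lr rr] eqn:Er. destruct (f p) as [lp rp] eqn:Ep.
  assert (E : f (p ⊕ r) = f r) by (rewrite Hpr; reflexivity).
  rewrite Hadd, Ep, Er in E by auto. cbn in E. rewrite Hlz in E.
  injection E as El Erp. apply Hc in Erp. subst lp rp.
  destruct (Hinv rr) as [b [Hb1 Hb2]]. destruct (Hsurj (lr, b)) as [y [Hy Efy]].
  split; [exact Hpp | split; [exact Hpr | split]].
  - apply Hinj; try apply K_subsemiring; auto.
    rewrite Hadd, Ep, Er by auto. cbn. rewrite Hlz, (proj2 (Hz rr)). reflexivity.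
  - exists y. split; apply Hinj; try apply K_subsemiring; auto;
      rewrite Hadd, Er, Efy, Ep by auto; cbn; rewrite Hlz; congruence.
Qed.

Lemma left_skew_ring_add_idem_mul_idem {e} : K e -> e ⊕ e = e -> e ⊗ e = e.
Proof.
  destruct K_left_skew as (L & addL & mulL & R & addR & mulR & f & [_ [Hband _]] & HR &
    Hinj & _ & Hadd & Hmul).
  destruct (skew_ring_zero HR) as [z [_ [_ [Hc Hzz]]]].
  intros He Hee. destruct (f e) as [l r] eqn:Ee.
  assert (E : f (e ⊕ e) = f e) by (rewrite Hee; reflexivity).
  rewrite Hadd, Ee in E by auto. cbn in E. injection E as _ Er. apply Hc in Er. subst r.
  apply Hinj; try apply K_subsemiring; auto.
  rewrite Hmul, Ee by auto. cbn. rewrite Hband, Hzz. reflexivity.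
Qed.

End LeftSkewRing.

Lemma mull_nsum_add_idem {e} n r : e ⊕ e = e -> e ⊗ ns n r = e ⊗ r.
Proof. intros He. rewrite <- nsum_mull. apply nsum_idem, add_idem_mulr, He. Qed.

Lemma mulr_nsum_add_idem {f} n r : f ⊕ f = f -> ns n r ⊗ f = r ⊗ f.
Proof. intros Hf. rewrite <- nsum_mulr. apply nsum_idem, add_idem_mull, Hf. Qed.

Lemma mull_group_idem {e u h y} : e ⊕ e = e -> u ⊕ h = u -> h = u ⊕ y -> e ⊗ u = e ⊗ h.
Proof.
  intros He Huh Hh. pose proof (add_idem_mulr _ u He) as I.
  rewrite <- Huh at 1. rewrite mulDl, Hh, mulDl, addA, I. reflexivity.
Qed.

Lemma mulr_group_idem {f u h y} : f ⊕ f = f -> h ⊕ u = u -> h = y ⊕ u -> u ⊗ f = h ⊗ f.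
Proof.
  intros Hf Hhu Hh. pose proof (add_idem_mull _ u Hf) as I.
  rewrite <- Hhu at 1. rewrite mulDr, Hh, mulDr, <- addA, I. reflexivity.
Qed.

Section QuasiCompletelyRegular.
Hypothesis qcr : quasi_completely_regular add mul.

Lemma qcr_add_idem_mul_idem {e} : e ⊕ e = e -> e ⊗ e = e.
Proof.
  intros He. destruct (qcr e) as [n [_ [x [H1 [H2 H3]]]]].
  rewrite nsum_idem in H1, H2, H3 by exact He.
  assert (E : e ⊕ x = e) by (rewrite H1 at 2; rewrite H2, <- addA, He; reflexivity).
  rewrite E in H3. exact H3.
Qed.

Section GroupIdempotent.
Variables (r y : X) (n : nat).
Hypothesis Hreg : ns n r = ns n r ⊕ y ⊕ ns n r.
Hypothesis Hcomm : ns n r ⊕ y = y ⊕ ns n r.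
Hypothesis Hmul : ns n r ⊗ (ns n r ⊕ y) = ns n r ⊕ y.
(* [h] is the identity of the subgroup containing the multiple [u] of [r]. *)
Local Notation u := (ns n r).
Local Notation h := (ns n r ⊕ y).

Lemma group_idem_add_idem : h ⊕ h = h.
Proof. rewrite addA, <- Hreg. reflexivity. Qed.

Lemma group_idem_mul_idem : h ⊗ h = h.
Proof. apply qcr_add_idem_mul_idem, group_idem_add_idem. Qed.

Lemma group_idem_addl : h ⊕ u = u.
Proof. symmetry. exact Hreg. Qed.

Lemma group_idem_addr : u ⊕ h = u.
Proof. rewrite Hcomm, addA. exact group_idem_addl. Qed.

Lemma mull_group_idem_eq : r ⊗ h = h.
Proof. rewrite <- (mulr_nsum_add_idem n r group_idem_add_idem). exact Hmul. Qed.

Lemma mulr_group_idem_eq : h ⊗ r = h.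
Proof.
  rewrite <- (mull_nsum_add_idem n r group_idem_add_idem).
  rewrite (mull_group_idem group_idem_add_idem group_idem_addr eq_refl).
  exact group_idem_mul_idem.
Qed.

(* [e ⊗ e = e] expands, through [e ⊗ r = e ⊗ h] and [r ⊗ h = h], into [e = h ⊕ _]. *)
Lemma group_idem_left_unit e z : e ⊕ e = e -> e ⊕ r = r -> e = r ⊕ z -> e ⊕ h = h /\ h ⊕ e = e.
Proof.
  intros He Her Hez.
  split; [rewrite addA, (nsum_absorb_l n _ _ Her); reflexivity |].
  assert (Eh : e ⊗ h = h ⊕ z ⊗ h).
  { rewrite Hez at 1. rewrite mulDr, mull_group_idem_eq. reflexivity. }
  assert (Er : e ⊗ r = e ⊗ h).
  { rewrite <- (mull_nsum_add_idem n r He). exact (mull_group_idem He group_idem_addr eq_refl). }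
  assert (E : e = h ⊕ z ⊗ h ⊕ e ⊗ z).
  { rewrite <- (qcr_add_idem_mul_idem He) at 1. rewrite Hez at 2. rewrite mulDl, Er, Eh.
    reflexivity. }
  rewrite E at 1.
  replace (h ⊕ (h ⊕ z ⊗ h ⊕ e ⊗ z)) with (h ⊕ h ⊕ z ⊗ h ⊕ e ⊗ z) by assoc.
  rewrite group_idem_add_idem. symmetry. exact E.
Qed.

Lemma group_idem_right_unit f z : f ⊕ f = f -> r ⊕ f = r -> f = z ⊕ r -> h ⊕ f = h /\ f ⊕ h = f.
Proof.
  intros Hf Hrf Hfz.
  split; [rewrite Hcomm, <- addA, (nsum_absorb_r n _ _ Hrf); reflexivity |].
  assert (Eh : h ⊗ f = h ⊗ z ⊕ h).
  { rewrite Hfz at 1. rewrite mulDl, mulr_group_idem_eq. reflexivity. }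
  assert (Er : r ⊗ f = h ⊗ f).
  { rewrite <- (mulr_nsum_add_idem n r Hf). apply (mulr_group_idem Hf group_idem_addl Hcomm). }
  assert (E : f = z ⊗ f ⊕ h ⊗ z ⊕ h).
  { rewrite <- (qcr_add_idem_mul_idem Hf) at 1. rewrite Hfz at 1. rewrite mulDr, Er, Eh, addA.
    reflexivity. }
  rewrite E at 1.
  replace (z ⊗ f ⊕ h ⊗ z ⊕ h ⊕ h) with (z ⊗ f ⊕ h ⊗ z ⊕ (h ⊕ h)) by assoc.
  rewrite group_idem_add_idem. symmetry. exact E.
Qed.

End GroupIdempotent.

Hypothesis idem_sum : forall e f, add_idem add e -> add_idem add f ->
  exists n, 0 < n /\ ns n (e ⊕ f) = ns n (e ⊕ f ⊕ e).

Lemma regular_group_of_qcr r x : r = r ⊕ x ⊕ r -> in_group r (r ⊕ x).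
Proof.
  intros H. destruct (qcr r) as [n [_ [y [Hreg [Hcomm Hmul]]]]].
  assert (He : r ⊕ x ⊕ (r ⊕ x) = r ⊕ x) by (rewrite addA, <- H; reflexivity).
  assert (Hf : x ⊕ r ⊕ (x ⊕ r) = x ⊕ r).
  { replace (x ⊕ r ⊕ (x ⊕ r)) with (x ⊕ (r ⊕ x ⊕ r)) by assoc. rewrite <- H. reflexivity. }
  assert (Hrf : r ⊕ (x ⊕ r) = r) by (rewrite addA; symmetry; exact H).
  destruct (group_idem_left_unit r y n Hreg Hcomm Hmul (r ⊕ x) x He (eq_sym H) eq_refl)
    as [Heh Hhe].
  destruct (group_idem_right_unit r y n Hreg Hcomm (x ⊕ r) x Hf Hrf eq_refl) as [Hhf Hfh].
  pose proof (group_idem_add_idem r y n Hreg) as Hh.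
  set (h := ns n r ⊕ y) in *.
  assert (Ehe : h = r ⊕ x).
  {
    destruct (idem_sum (r ⊕ x) h He Hh) as [m [_ E]].
    rewrite Heh, Hhe, !nsum_idem in E by assumption. exact E. }
  apply in_group_of_absorb; [exact H | |]; rewrite <- Ehe; [| exact Hhf].
  rewrite <- Hrf at 1. rewrite <- addA, Hfh, Hrf. reflexivity.
Qed.

End QuasiCompletelyRegular.

Lemma subsemiring_of_bi_ideal {K T : X -> Prop} : (forall x, K x -> T x) ->
  (forall a x, K a -> T x -> K (a ⊕ x) /\ K (x ⊕ a) /\ K (a ⊗ x) /\ K (x ⊗ a)) ->
  subsemiring add mul K.
Proof. intros HKT Hbi u v Hu Hv. destruct (Hbi u v Hu (HKT v Hv)) as [? [_ [? _]]]. auto. Qed.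

Section BLattice.
Hypothesis blattice : b_lattice_of_nil_ext_left_skew_rings add mul.

Lemma quasi_regular_of_b_lattice : add_quasi_regular add.
Proof.
  intros a. destruct blattice as (rho' & Hrefl & _ & _ & _ & _ & _ & _ & Hcls).
  destruct (Hcls a) as [_ (K & HKT & Hbi & Hnil & Hlsr)].
  destruct (Hnil a (Hrefl a)) as [n [Hn Hk]]. exists n. split; auto.
  exact (left_skew_ring_regular (subsemiring_of_bi_ideal HKT Hbi) Hlsr Hk).
Qed.

Lemma add_idem_mul_idem_of_b_lattice e : e ⊕ e = e -> e ⊗ e = e.
Proof.
  intros He. destruct blattice as (rho' & Hrefl & _ & _ & _ & _ & _ & _ & Hcls).
  destruct (Hcls e) as [_ (K & HKT & Hbi & Hnil & Hlsr)].
  destruct (Hnil e (Hrefl e)) as [n [_ Hk]]. rewrite nsum_idem in Hk by exact He.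
  exact (left_skew_ring_add_idem_mul_idem (subsemiring_of_bi_ideal HKT Hbi) Hlsr Hk He).
Qed.

Lemma regular_group_of_b_lattice r x : r = r ⊕ x ⊕ r -> in_group r (r ⊕ x).
Proof.
  intros H.
  destruct blattice as (rho' & Hrefl & Hsym & Htrans & Hcong & _ & Hidem & Hcomm & Hcls).
  destruct (Hcls r) as [_ (K & HKT & Hbi & Hnil & Hlsr)].
  assert (Hxr : rho' r (x ⊕ r)).
  { rewrite H at 1. apply (Htrans _ (r ⊕ (r ⊕ x))); [apply Hcomm |].
    rewrite addA. apply (Htrans _ (r ⊕ x)); [apply (Hcong _ _ x (Hidem r)) | apply Hcomm]. }
  assert (Hxrx : rho' r (x ⊕ r ⊕ x)).
  { apply (Htrans _ (x ⊕ r)); auto. apply Hsym, (Htrans _ (x ⊕ (x ⊕ r))); [apply Hcomm |].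
    rewrite addA. apply (Hcong _ _ r (Hidem x)). }
  destruct (Hnil (x ⊕ r) Hxr) as [n [_ Hk]].
  assert (Kr : K r).
  { rewrite <- (nsum_absorbed_r n r (x ⊕ r)) by (rewrite addA; symmetry; exact H).
    apply (Hbi _ r Hk (Hrefl r)). }
  assert (Krx : K (r ⊕ x)).
  { replace (r ⊕ x) with (r ⊕ (x ⊕ r ⊕ x)) by (rewrite !addA, <- H; reflexivity).
    apply (Hbi r _ Kr Hxrx). }
  apply (left_skew_ring_in_group (subsemiring_of_bi_ideal HKT Hbi) Hlsr Kr Krx).
  - rewrite addA, <- H. reflexivity.
  - symmetry. exact H.
Qed.

End BLattice.

Lemma add_idem_mul_idem_of_Hstar (Hs : forall b, Hstar add (b ⊗ b) b) e :
  e ⊕ e = e -> e ⊗ e = e.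
Proof.
  intros He. pose proof (add_idem_mull _ e He) as Hee.
  destruct (Hs e) as [HL HR].
  specialize (HL 1 1 (is_m_add_idem Hee) (is_m_add_idem He)).
  specialize (HR 1 1 (is_m_add_idem Hee) (is_m_add_idem He)).
  exact (greenLR_idem_eq Hee He HL HR).
Qed.

End Distributive.
End AdditiveSemigroup.

Section Equivalence.
Context {X : Type} {add mul : X -> X -> X}.
Hypothesis HS : is_semiring add mul.
Local Infix "⊕" := add (at level 50, left associativity).
Local Infix "⊗" := mul (at level 40, left associativity).

Definition core_axioms : Prop :=
  add_quasi_regular add /\ (forall r x, r = r ⊕ x ⊕ r -> in_group add r (r ⊕ x)) /\
  (forall e, e ⊕ e = e -> e ⊗ e = e).

Lemma core_axioms_of_b_lattice :
  b_lattice_of_nil_ext_left_skew_rings add mul -> core_axioms.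
Proof.
  destruct HS as (addA & _ & _ & _). intros H. split; [| split].
  - exact (quasi_regular_of_b_lattice add mul H).
  - exact (regular_group_of_b_lattice add addA mul H).
  - exact (add_idem_mul_idem_of_b_lattice add mul H).
Qed.

Lemma core_axioms_of_qcr : quasi_completely_regular add mul ->
  (forall e f, add_idem add e -> add_idem add f ->
     exists n, 0 < n /\ nsum add n (e ⊕ f) = nsum add n (e ⊕ f ⊕ e)) -> core_axioms.
Proof.
  destruct HS as (addA & _ & mulDl & mulDr). intros Hq Hs. split; [| split].
  - intros a. destruct (Hq a) as [n [Hn [x [Hx _]]]]. exists n. split; auto. exists x. exact Hx.
  - exact (regular_group_of_qcr add addA mul mulDl mulDr Hq Hs).
  - exact (@qcr_add_idem_mul_idem _ add addA mul Hq).
Qed.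

Lemma core_axioms_of_Hstar : add_quasi_regular add -> (forall b, Hstar add (b ⊗ b) b) ->
  (forall a x, a = a ⊕ x ⊕ a -> a ⊕ x = a ⊕ (x ⊕ x) ⊕ a) -> core_axioms.
Proof.
  destruct HS as (addA & _ & mulDl & _). intros Hq Hs Hc. split; [exact Hq | split].
  - exact (regular_group_of_sandwich add addA Hc).
  - exact (add_idem_mul_idem_of_Hstar add addA mul mulDl Hs).
Qed.

Lemma b_lattice_of_core_axioms : core_axioms -> b_lattice_of_nil_ext_left_skew_rings add mul.
Proof.
  destruct HS as (addA & mulA & mulDl & mulDr). intros (Hq & Hg & Hm).
  exact (b_lattice_of_core add addA mul mulA mulDl mulDr Hq Hg Hm).
Qed.

Lemma qcr_of_core_axioms : core_axioms -> quasi_completely_regular add mul /\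
  (forall e f, add_idem add e -> add_idem add f ->
     exists n, 0 < n /\ nsum add n (e ⊕ f) = nsum add n (e ⊕ f ⊕ e)).
Proof.
  destruct HS as (addA & _ & mulDl & mulDr). intros (Hq & Hg & Hm). split.
  - exact (qcr_of_core add addA mul mulDl mulDr Hq Hg Hm).
  - exact (nsum_idem_sum_of_core add addA Hq Hg).
Qed.

Lemma Hstar_of_core_axioms : core_axioms -> add_quasi_regular add /\
  (forall b, Hstar add (b ⊗ b) b) /\
  (forall a x, a = a ⊕ x ⊕ a -> a ⊕ x = a ⊕ (x ⊕ x) ⊕ a).
Proof.
  destruct HS as (addA & _ & mulDl & mulDr). intros (Hq & Hg & Hm). split; [exact Hq | split].
  - exact (Hstar_mul_self_of_core add addA mul mulDl mulDr Hq Hg Hm).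
  - exact (regular_sandwich_of_core add addA Hq Hg).
Qed.

End Equivalence.

Theorem theorem3p10 (S : Type) (add mul : S -> S -> S)
  (HS : is_semiring add mul) :
  (b_lattice_of_nil_ext_left_skew_rings add mul <->
   (quasi_completely_regular add mul /\
    forall e f, add_idem add e -> add_idem add f ->
      exists n, 0 < n /\ nsum add n (add e f) = nsum add n (add (add e f) e))) /\
  ((quasi_completely_regular add mul /\
    forall e f, add_idem add e -> add_idem add f ->
      exists n, 0 < n /\ nsum add n (add e f) = nsum add n (add (add e f) e)) <->
   (add_quasi_regular add /\
    (forall b, Hstar add (mul b b) b) /\
    (forall a x, a = add (add a x) a -> add a x = add (add a (add x x)) a))).
Proof.
  split; split.
  - intros H. exact (qcr_of_core_axioms HS (core_axioms_of_b_lattice HS H)).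
  - intros [Hq Hs]. exact (b_lattice_of_core_axioms HS (core_axioms_of_qcr HS Hq Hs)).
  - intros [Hq Hs]. exact (Hstar_of_core_axioms HS (core_axioms_of_qcr HS Hq Hs)).
  - intros (Hq & Hs & Hc). exact (qcr_of_core_axioms HS (core_axioms_of_Hstar HS Hq Hs Hc)).
Qed.
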